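(* Let $G$ be a finite group and $p$ a prime such that the Sylow $p$-subgroups of $G$ are not normal. Then the set $G_p$ of $p$-elements of $G$ cannot be covered by (is not contained in the union of) $p$ Sylow $p$-subgroups of $G$. In particular, if $\nu_p(G)=p+1$, then $G$ does not have a redundant Sylow $p$-subgroup.
   Context: $\mathrm{Syl}_p(G)$ denotes the set of Sylow $p$-subgroups of $G$ and $\nu_p(G)=|\mathrm{Syl}_p(G)|$. $G$ is said to have a redundant Sylow $p$-subgroup if $G_p$ is contained in the union of the members of some proper subset of $\mathrm{Syl}_p(G)$. *)

From mathcomp Require Import all_boot all_fingroup all_solvable.
Set Implicit Arguments. Unset Strict Implicit. Unset Printing Implicit Defensive.
Local Open Scope group_scope.

Definition p_elements (gT : finGroupType) (p : nat) (G : {set gT}) : {set gT} :=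
  [set x in G | p.-elt x].

Definition covers_p_elements (gT : finGroupType) (p : nat) (G : {set gT})
    (S : {set {group gT}}) : bool :=
  p_elements p G \subset \bigcup_(P in S) P.

Definition nu (gT : finGroupType) (p : nat) (G : {set gT}) : nat := #|'Syl_p(G)|.

Definition has_redundant_sylow (gT : finGroupType) (p : nat) (G : {set gT}) : Prop :=
  exists S : {set {group gT}}, S \proper 'Syl_p(G) /\ covers_p_elements p G S.

From mathcomp Require Import all_boot all_fingroup all_solvable.
From mathcomp Require Import zify.
Set Implicit Arguments. Unset Strict Implicit. Unset Printing Implicit Defensive.
Local Open Scope group_scope.

(* Since nu_p(G) = 1 mod p, a non-normal Sylow p-subgroup leaves at least
   p + 1 Sylow p-subgroups, so any p of them miss some Sylow p-subgroup Q.  Each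
   of them meets Q in a proper subgroup, of order at most |Q|/p, and a
   p-group cannot be covered by p subgroups of index at least p: they have at
   most p (|Q|/p - 1) = |Q| - p < |Q| - 1 non-identity elements between them. *)

Lemma leq_card_bigcup (I T : finType) (S : {pred I}) (F : I -> {set T}) :
  #|\bigcup_(i in S) F i| <= \sum_(i in S) #|F i|.
Proof.
elim/big_ind2: _ => [|m A n B leAm leBn|//]; first by rewrite cards0.
exact: leq_trans (leq_card_setU A B) (leq_add leAm leBn).
Qed.

Lemma card_Syl_gt_prime (gT : finGroupType) (G : {group gT}) (p : nat) :
  prime p -> #|'Syl_p(G)| != 1%N -> p < #|'Syl_p(G)|.
Proof.
move=> p_pr nu_neq1; have := divn_eq #|'Syl_p(G)| p.
rewrite card_Syl_mod //; move: nu_neq1 (prime_gt1 p_pr).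
case: (#|'Syl_p(G)| %/ p) => [|k] nu_neq1 p_gt1 nu_eq; lia.
Qed.

Section PGroupCovering.

Variables (gT : finGroupType) (p : nat).
Implicit Types (Q H : {group gT}) (S : {set {group gT}}).

Lemma proper_pgroup_indexg_ge Q H : p.-group Q -> H \proper Q -> p <= #|Q : H|.
Proof.
move=> pQ ltHQ; have ntQ : Q :!=: 1.
  by apply: contraTneq ltHQ => ->; rewrite /proper sub1G andbF.
have [p_pr _ _] := pgroup_pdiv pQ ntQ.
have : 1 < #|Q : H| by rewrite indexg_gt1 (proper_subn ltHQ).
have /p_natP [[|k] -> //] := pnat_dvd (dvdn_indexg Q H) pQ.
by rewrite expnS leq_pmulr ?expn_gt0 ?prime_gt0.
Qed.

Lemma proper_pgroup_card_le Q H : p.-group Q -> H \proper Q -> (#|H| * p <= #|Q|)%N.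
Proof.
move=> pQ ltHQ; rewrite -(Lagrange (proper_sub ltHQ)) leq_mul2l.
by rewrite proper_pgroup_indexg_ge ?orbT.
Qed.

Lemma pgroup_not_covered Q S :
    p.-group Q -> Q :!=: 1 -> #|S| <= p ->
    (forall P : {group gT}, P \in S -> ~~ (Q \subset P)) ->
  ~~ (Q \subset \bigcup_(P in S) P).
Proof.
move=> pQ ntQ leSp nsQS; apply/negP => covQ.
have [p_pr _ _] := pgroup_pdiv pQ ntQ; have p_gt1 := prime_gt1 p_pr.
have covQ1 : Q^# \subset \bigcup_(P in S) (Q :&: P)^#.
  apply/subsetP => x /setD1P [ntx Qx].
  have /bigcupP [P SP Px] := subsetP covQ x Qx.
  by apply/bigcupP; exists P; rewrite // !inE ntx Qx Px.
have leQP1 P : P \in S -> (#|(Q :&: P)^#| * p <= #|Q| - p)%N.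
  move=> SP; have ltQPQ : (Q :&: P)%G \proper Q.
    by rewrite /proper subsetIl subsetI subxx nsQS.
  have := proper_pgroup_card_le pQ ltQPQ.
  rewrite (cardsD1 1 (Q :&: P)) group1 mulSn => leQP.
  by rewrite leq_subRL // (leq_trans (leq_addr _ _) leQP).
have leQ1 : (#|Q^#| * p <= p * (#|Q| - p))%N.
  apply: leq_trans (leq_mul (subset_leq_card covQ1) (leqnn p)) _.
  rewrite (leq_trans (leq_mul (leq_card_bigcup _ _) (leqnn p))) //.
  rewrite big_distrl /= (leq_trans (leq_sum _ leQP1)) // sum_nat_const.
  by rewrite leq_mul2r leSp orbT.
have ntQ1 : 1 < #|Q| by rewrite cardG_gt1.
move: leQ1 ntQ1; rewrite (cardsD1 1 Q) group1 add1n ltnS.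
move: #|Q^#| => n; nia.
Qed.

End PGroupCovering.

Lemma pgroup_sub_p_elements (gT : finGroupType) (p : nat) (G H : {group gT}) :
  H \subset G -> p.-group H -> H \subset p_elements p G.
Proof.
move=> sHG pH; apply/subsetP => x Hx.
by rewrite inE (subsetP sHG x Hx) (mem_p_elt pH Hx).
Qed.

Lemma Syl_not_covered (gT : finGroupType) (G : {group gT}) (p : nat)
    (S : {set {group gT}}) :
    prime p -> #|'Syl_p(G)| != 1%N -> S \subset 'Syl_p(G) -> #|S| <= p ->
  ~~ covers_p_elements p G S.
Proof.
move=> p_pr nu_neq1 sSSyl leSp; apply/negP => covS.
have [Q SylQ QnS] : exists2 Q, Q \in 'Syl_p(G) & Q \notin S.
  apply/subsetPn; apply: contraL leSp => sSylS; rewrite -ltnNge.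
  exact: leq_trans (card_Syl_gt_prime p_pr nu_neq1) (subset_leq_card sSylS).
have sylQ : p.-Sylow(G) Q by rewrite inE in SylQ.
have ntQ : Q :!=: 1.
  apply: contra nu_neq1 => /eqP Q1; apply/normal_sylowP.
  by exists Q; rewrite // Q1 normal1.
have nsQS P : P \in S -> ~~ (Q \subset P).
  move=> SP; apply: contraNN QnS => sQP.
  have sylP : p.-Sylow(G) P by have := subsetP sSSyl P SP; rewrite inE.
  suff -> : Q = P by [].
  by apply/val_inj/esym/(sub_pHall sylQ (pHall_pgroup sylP) sQP (pHall_sub sylP)).
have covQ : Q \subset \bigcup_(P in S) P.
  exact: subset_trans (pgroup_sub_p_elements (pHall_sub sylQ) (pHall_pgroup sylQ)) covS.
exact: negP (pgroup_not_covered (pHall_pgroup sylQ) ntQ leSp nsQS) covQ.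
Qed.

Theorem theorem8p2 (gT : finGroupType) (G : {group gT}) (p : nat) :
  prime p ->
  (forall P : {group gT}, P \in 'Syl_p(G) -> ~~ (P <| G)) ->
  (forall S : {set {group gT}}, S \subset 'Syl_p(G) -> #|S| <= p ->
     ~~ covers_p_elements p G S)
  /\ (nu p G = p.+1 -> ~ has_redundant_sylow p G).
Proof.
move=> p_pr notnormal.
have nu_neq1 : #|'Syl_p(G)| != 1%N.
  by apply/normal_sylowP => -[P sylP nPG]; move: nPG; apply/negP/notnormal; rewrite inE.
split=> [S|nu_eq [S [ltS covS]]]; first exact: Syl_not_covered.
have leSp : #|S| <= p by rewrite -ltnS -nu_eq proper_card.
by move: covS; apply/negP/(Syl_not_covered p_pr nu_neq1 (proper_sub ltS)).
Qed.
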